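(* Let $c,n_0\in\mathbb{Z}$ and let $p$ be a prime such that (1) $(2c-1)\,n_0\equiv 3c^2-1 \pmod{p}$, and (2) $(c^2-c)\,n_0\equiv c^3-c-1 \pmod{p^2}$. Then for every integer $k$, $(c,p,p^2k+n_0)\in\mathcal{CS}$, and the CS matrix $X_{c,p,p^2k+n_0}$ is not similar to $A_n=X_{1,1,n+2}$ for any integers $k,n$. If moreover $n_0\equiv n'\pmod p$ for some integer $n'$ such that every $(c',d',n')\in\mathcal{CS}$ of trace $n'$ is Gompf equivalent to $(1,1,2)$, then for every integer $k$ and every $\varepsilon\in\{0,1\}$ the Cappell–Shaneson homotopy sphere $\Sigma^\varepsilon_{X_{c,p,p^2k+n_0}}$ is diffeomorphic to the standard $S^4$.
   Context: $f_n(x)=x^3-nx^2+(n-1)x-1$. A CS matrix is $A\in SL(3;\mathbb{Z})$ with $\det(A-I)=1$. $\mathcal{CS}=\{(c,d,n)\in\mathbb{Z}^3: d\ne0,\ f_n(c)\equiv0\pmod d\}$, and for $(c,d,n)\in\mathcal{CS}$, $X_{c,d,n}=\begin{bmatrix}0&a&b\\0&c&d\\1&0&n-c\end{bmatrix}$ with $b=(c-1)(n-c-1)$, $a=-f_n(c)/d$; it is a CS matrix of trace $n$. Similarity means conjugacy by an element of $SL(3;\mathbb{Z})$. Gompf equivalence on $\mathcal{CS}$ is the equivalence relation generated by $(c,d,n)\sim(c',d',n')$ when $X_{c,d,n}$, $X_{c',d',n'}$ are similar, and $(c,d,n)\sim(c,d,n+kd)$ for $k\in\mathbb{Z}$. CS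 spheres: for $A\in SL(3;\mathbb{Z})$, let $f_A:T^3\to T^3$ ($T^3=\mathbb{R}^3/\mathbb{Z}^3$) be the induced diffeomorphism, isotoped to be the identity near a point $y$; let $W_A=T^3\times\mathbb{R}/(x,t)\sim(f_A(x),t-1)$ be its mapping torus, and let $\Sigma^\varepsilon_A$ be obtained from $W_A$ by surgery on the circle $\{y\}\times\mathbb{R}/\!\sim$ with framing $\varepsilon\in\mathbb{Z}/2$. For a CS matrix $A$, $\Sigma_A^\varepsilon$ is a homotopy 4-sphere. Known facts usable: Gompf equivalent CS matrices give diffeomorphic CS spheres, and $\Sigma^\varepsilon_{X_{1,1,2}}$ is diffeomorphic to $S^4$ for $\varepsilon=0,1$. *)

From HB Require Import structures.
From mathcomp Require Import all_boot all_order all_algebra.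
Set Implicit Arguments. Unset Strict Implicit. Unset Printing Implicit Defensive.
Import Order.TTheory GRing.Theory Num.Theory.
Local Open Scope ring_scope.

Definition fcs (n x : int) : int := x ^+ 3 - n * x ^+ 2 + (n - 1) * x - 1.

Definition inCS (c d n : int) : Prop := d != 0 /\ (d %| fcs n c)%Z.

Definition Xcs (c d n : int) : 'M[int]_3 :=
  let a := (- fcs n c %/ d)%Z in
  let b := (c - 1) * (n - c - 1) in
  \matrix_(i < 3, j < 3)
    match nat_of_ord i, nat_of_ord j with
    | 0%N, 0%N => 0 | 0%N, 1%N => a | 0%N, _ => b
    | 1%N, 0%N => 0 | 1%N, 1%N => c | 1%N, _ => d
    | _, 0%N => 1 | _, 1%N => 0 | _, _ => n - c
    end.

(* Similarity: conjugacy by an element of SL(3,Z):  B = P^{-1} A P, P in SL(3,Z),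
   written without inverse as  A P = P B  with det P = 1. *)
Definition similarSL3 (A B : 'M[int]_3) : Prop :=
  exists P : 'M[int]_3, \det P = 1 /\ A *m P = P *m B.

Inductive gompf : int * int * int -> int * int * int -> Prop :=
| gompf_refl c d n : inCS c d n -> gompf (c, d, n) (c, d, n)
| gompf_sim c d n c' d' n' : inCS c d n -> inCS c' d' n' ->
    similarSL3 (Xcs c d n) (Xcs c' d' n') -> gompf (c, d, n) (c', d', n')
| gompf_shift c d n k : inCS c d n -> inCS c d (n + k * d) ->
    gompf (c, d, n) (c, d, n + k * d)
| gompf_sym t t' : gompf t t' -> gompf t' t
| gompf_trans t t' t'' : gompf t t' -> gompf t' t'' -> gompf t t''.

From HB Require Import structures.
From mathcomp Require Import all_boot all_order all_algebra.
From mathcomp Require Import ring.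
Set Implicit Arguments.
Unset Strict Implicit.
Unset Printing Implicit Defensive.

Import Order.TTheory GRing.Theory Num.Theory.
Local Open Scope ring_scope.

(* Similarity preserves the property of being congruent mod p to a matrix of
   rank at most one, hence also for X - cI.  The two congruences say exactly
   that X_{c,p,N} - cI = [[-c,a,b],[0,0,p],[1,0,N-c]] is congruent mod p to the
   rank-one matrix (-c,0,1)^T (1,0,N-2c) (they give p | a and
   p | b + c(N-2c)), whereas A_n - cI has a 2x2 minor equal to -1.
   For the spheres, N is congruent to n' mod p, so a Gompf shift by a multiple
   of p joins (c,p,N) to (c,p,n'), which is Gompf equivalent to (1,1,2). *)

Lemma fcsE (n x : int) : fcs n x = (x ^+ 3 - x - 1) - n * (x ^+ 2 - x).
Proof. by rewrite /fcs; ring. Qed.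

Lemma fcs_eq_mod (d n n' x : int) :
  (n = n' %[mod d])%Z -> (fcs n x = fcs n' x %[mod d])%Z.
Proof.
move=> /eqP; rewrite !eqz_mod_dvd => dvd_nn'; apply/eqP; rewrite eqz_mod_dvd.
have -> : fcs n x - fcs n' x = - ((n - n') * (x ^+ 2 - x)) by rewrite !fcsE; ring.
by rewrite rpredN dvdz_mulr.
Qed.

Lemma dvdz_fcs_eq_mod (d n n' x : int) :
  (n = n' %[mod d])%Z -> (d %| fcs n x)%Z = (d %| fcs n' x)%Z.
Proof.
by move=> /(fcs_eq_mod x) eq_f; apply/dvdz_mod0P/dvdz_mod0P; rewrite eq_f.
Qed.

Lemma inCS_eq_mod (c d n n' : int) :
  (n = n' %[mod d])%Z -> inCS c d n -> inCS c d n'.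
Proof. by move=> eq_nn' [d0 dvd_f]; rewrite /inCS -(dvdz_fcs_eq_mod _ eq_nn'). Qed.

Lemma gompf_eq_mod (c d n n' : int) :
  inCS c d n -> (n = n' %[mod d])%Z -> gompf (c, d, n) (c, d, n').
Proof.
move=> CSn eq_nn'; have CSn' := inCS_eq_mod eq_nn' CSn.
move/eqP: eq_nn'; rewrite eqz_mod_dvd => /dvdzP[k def_k].
have def_n' : n' = n + - k * d by rewrite mulNr -def_k; ring.
by rewrite def_n' in CSn' *; apply: gompf_shift.
Qed.

Definition rank1_mod (d : int) m n (U : 'M[int]_(m, n)) :=
  exists (u : 'cV_m) (w : 'rV_n) (E : 'M_(m, n)), U = u *m w + d *: E.

Lemma rank1_mod_dvd (d : int) m n (U : 'M[int]_(m, n)) (u : 'cV_m) (w : 'rV_n) :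
  (forall i j, (d %| (U - u *m w) i j)%Z) -> rank1_mod d U.
Proof.
move=> dvdUuw; exists u, w, (map_mx (fun x => (x %/ d)%Z) (U - u *m w)).
apply/matrixP=> i j; have := dvdUuw i j; rewrite !mxE => dvd_ij.
by rewrite (mulrC d) divzK // addrC subrK.
Qed.

Lemma rank1_mod_mull (d : int) k m n (A : 'M[int]_(k, m)) (U : 'M_(m, n)) :
  rank1_mod d U -> rank1_mod d (A *m U).
Proof.
case=> u [w [E ->]]; exists (A *m u), w, (A *m E).
by rewrite mulmxDr mulmxA scalemxAr.
Qed.

Lemma rank1_mod_mulr (d : int) m n k (U : 'M[int]_(m, n)) (A : 'M_(n, k)) :
  rank1_mod d U -> rank1_mod d (U *m A).
Proof.
case=> u [w [E ->]]; exists u, (w *m A), (E *m A).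
by rewrite mulmxDl -mulmxA scalemxAl.
Qed.

Lemma rank1_mod_minor (d : int) m n (U : 'M[int]_(m, n)) i1 i2 j1 j2 :
  rank1_mod d U -> (d %| U i1 j1 * U i2 j2 - U i1 j2 * U i2 j1)%Z.
Proof.
case=> u [w [E ->]]; rewrite !mxE !big_ord1.
set a1 := u i1 _; set a2 := u i2 _; set b1 := w _ j1; set b2 := w _ j2.
apply/dvdzP; exists (a1 * b1 * E i2 j2 + E i1 j1 * a2 * b2 + d * E i1 j1 * E i2 j2
  - a1 * b2 * E i2 j1 - E i1 j2 * a2 * b1 - d * E i1 j2 * E i2 j1).
by ring.
Qed.

Lemma similarSL3_rank1_mod (d c : int) (A B : 'M[int]_3) :
  similarSL3 A B -> rank1_mod d (A - c%:M) -> rank1_mod d (B - c%:M).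
Proof.
case=> P [detP AP_PB] rkA.
have -> : B - c%:M = \adj P *m (A - c%:M) *m P.
  rewrite mulmxBr mulmxBl mul_mx_scalar -scalemxAl mul_adj_mx detP.
  by rewrite -mulmxA AP_PB mulmxA mul_adj_mx detP !mul1mx scalemx1.
exact/rank1_mod_mulr/rank1_mod_mull.
Qed.

Lemma Xcs_sub_scalar_rank1_mod (c d N : int) :
  (d * d %| fcs N c)%Z -> ((2 * c - 1) * N = 3 * c ^+ 2 - 1 %[mod d])%Z ->
  rank1_mod d (Xcs c d N - c%:M).
Proof.
move=> dvd_f /eqP; rewrite eqz_mod_dvd => dvd_trace.
have dvd_a : (d %| - fcs N c %/ d)%Z.
  case/dvdzP: dvd_f => q ->; have [-> | d0] := eqVneq d 0; first by rewrite mulr0.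
  by rewrite -mulNr mulrA mulzK // dvdz_mull.
pose u : 'cV[int]_3 := \col_i [:: - c; 0; 1]`_i.
pose w : 'rV[int]_3 := \row_j [:: 1; 0; N - 2 * c]`_j.
apply: (rank1_mod_dvd (u := u) (w := w)) => i j.
rewrite !mxE big_ord1 !mxE.
case: i => [[|[|[|i]]] Hi] //; case: j => [[|[|[|j]]] Hj] //=.
all: rewrite ?mulr1n ?mulr0n ?mulr0 ?mulr1 ?mul0r ?mul1r ?subr0 ?sub0r ?mulNr.
all: rewrite ?opprK ?subrr ?addNr ?dvdz0 //.
  by rewrite (_ : _ + _ = (2 * c - 1) * N - (3 * c ^+ 2 - 1)) //; ring.
by rewrite (_ : _ - _ = 0) ?dvdz0 //; ring.
Qed.

Lemma Xcs11_sub_scalar_not_rank1_mod (d c n : int) :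
  ~~ (d %| 1)%Z -> ~ rank1_mod d (Xcs 1 1 n - c%:M).
Proof.
move=> ndvd_d1; pose i k : 'I_3 := inord k.
move/(rank1_mod_minor (i 1) (i 2) (i 0) (i 2)).
rewrite !mxE -!val_eqE /= !inordK //= mulr0n mulr1n !subr0 mul0r sub0r.
by rewrite rpredN (negbTE ndvd_d1).
Qed.

Theorem theorem5 (c n0 : int) (p : nat) :
  prime p ->
  ((2 * c - 1) * n0 = 3 * c ^+ 2 - 1 %[mod p%:Z])%Z ->
  ((c ^+ 2 - c) * n0 = c ^+ 3 - c - 1 %[mod (p%:Z) ^+ 2])%Z ->
  (forall k : int, inCS c p%:Z ((p%:Z) ^+ 2 * k + n0)) /\
  (forall k n : int,
     ~ similarSL3 (Xcs c p%:Z ((p%:Z) ^+ 2 * k + n0)) (Xcs 1 1 (n + 2))) /\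
  (forall n' : int,
     (n0 = n' %[mod p%:Z])%Z ->
     (forall c' d' : int, inCS c' d' n' -> gompf (c', d', n') (1, 1, 2)) ->
     (* abstract model of CS spheres and diffeomorphism, subject to the known facts *)
     forall (Mfd : Type) (diffeo : Mfd -> Mfd -> Prop)
            (Sigma : 'M[int]_3 -> bool -> Mfd) (S4 : Mfd),
       (forall x y, diffeo x y -> diffeo y x) ->
       (forall x y z, diffeo x y -> diffeo y z -> diffeo x z) ->
       (forall c1 d1 n1 c2 d2 n2 (e : bool), gompf (c1, d1, n1) (c2, d2, n2) ->
          diffeo (Sigma (Xcs c1 d1 n1) e) (Sigma (Xcs c2 d2 n2) e)) ->
       (forall e : bool, diffeo (Sigma (Xcs 1 1 2) e) S4) ->
       forall (k : int) (e : bool),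
         diffeo (Sigma (Xcs c p%:Z ((p%:Z) ^+ 2 * k + n0)) e) S4).
Proof.
move=> p_pr cong_trace cong_f; set P := p%:Z.
have P_neq0 : P != 0 by rewrite eqz_nat -lt0n prime_gt0.
have P_ndvd1 : ~~ (P %| 1)%Z.
  by rewrite dvdz1 absz_nat; case: (p) (prime_gt1 p_pr) => [|[]].
have trace_eq k : (P ^+ 2 * k + n0 = n0 %[mod P])%Z.
  by rewrite expr2 -mulrA (mulrC P) modzMDl.
have dvd_f k : (P * P %| fcs (P ^+ 2 * k + n0) c)%Z.
  rewrite -expr2 (mulrC (P ^+ 2)) (dvdz_fcs_eq_mod _ (modzMDl k n0 (P ^+ 2))).
  by rewrite fcsE -rpredN opprB (mulrC n0) -eqz_mod_dvd; apply/eqP.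
have CS k : inCS c P (P ^+ 2 * k + n0).
  by split=> //; apply: dvdz_trans (dvd_f k); apply: dvdz_mulr.
split=> //; split.
  move=> k n /similarSL3_rank1_mod rank1_sim.
  apply: (Xcs11_sub_scalar_not_rank1_mod (c := c) P_ndvd1); apply: rank1_sim.
  apply: Xcs_sub_scalar_rank1_mod => //.
  by rewrite -modzMmr trace_eq modzMmr.
move=> n' eq_n0n' gompf_n' Mfd diffeo Sigma S4 _ diffeo_trans diffeo_gompf
  diffeo_S4 k e.
apply: diffeo_trans (diffeo_S4 e); apply: diffeo_gompf.
have eq_N : (P ^+ 2 * k + n0 = n' %[mod P])%Z by rewrite trace_eq.
apply: gompf_trans (gompf_eq_mod (CS k) eq_N) _.
exact/gompf_n'/(inCS_eq_mod eq_N).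
Qed.
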